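(* There are constants $c>0$ and $\lambda\geq 1$ such that for all sufficiently large $n$ and all parameters $r\ge 0$, $0<\epsilon\leq 1$, $R$ with $\epsilon<R$ and $c\sqrt{\log n}\leq R\leq\sqrt n$ the following holds. Let $m=\lceil\sqrt{5n}/R\rceil$ and partition the square $[0,\sqrt n]^2$ into $m\times m$ congruent square cells. If the positions $P_{1},\dots,P_{n}$ of the $n$ nodes are independent, each distributed according to the stationary distribution $\pi$ of the single-node random walk on $M_{n,r,\epsilon}$, then with probability at least $1-1/n^2$, every cell contains at least $R^2/\lambda$ and at most $\lambda R^2$ nodes.
   Context: $L_{n,\epsilon}=\{(i\epsilon,j\epsilon): i,j\in\mathbb{N},\ i,j\le\sqrt n/\epsilon\}$. The move graph $M_{n,r,\epsilon}$ has vertex set $L_{n,\epsilon}$ and edges between $\mathbf{x},\mathbf{y}$ with Euclidean distance $d(\mathbf{x},\mathbf{y})\le r$; $\Gamma(\mathbf{x})=\{\mathbf{y}\in L_{n,\epsilon}: d(\mathbf{x},\mathbf{y})\le r\}$ (it contains $\mathbf{x}$). Each node moves by a Markov chain: from position $\mathbf{x}$ it moves to a uniformly random point of $\Gamma(\mathbf{x})$. Its stationary distribution is $\pi(\mathbf{x})=|\Gamma(\mathbf{x})|/\sum_{\mathbf{y}\in L_{n,\epsilon}}|\Gamma(\mathbf{y})|$. A node belongs to a cell if its position lies in the cell (for points on cell boundaries, each point of $L_{n,\epsilon}$ is assigned to exactly one cell). *)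

From Stdlib Require Import Reals Lra ZArith List Arith Bool.
Import ListNotations.
Open Scope R_scope.

(* Lattice points (i*eps, j*eps) are represented by their index pair (i,j). *)
Definition pt : Type := (nat * nat)%type.

Definition Rfloor (x : R) : Z := (up x - 1)%Z.
Definition Rceil (x : R) : Z := (- Rfloor (- x))%Z.

Definition Rleb (x y : R) : bool := if Rle_dec x y then true else false.

Definition lat_bound (n : nat) (eps : R) : nat :=
  Z.to_nat (Rfloor (sqrt (INR n) / eps)).

Definition lattice (n : nat) (eps : R) : list pt :=
  list_prod (seq 0 (S (lat_bound n eps))) (seq 0 (S (lat_bound n eps))).

Definition xcoord (eps : R) (p : pt) : R := INR (fst p) * eps.
Definition ycoord (eps : R) (p : pt) : R := INR (snd p) * eps.

Definition dist (eps : R) (p q : pt) : R :=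
  sqrt ((xcoord eps p - xcoord eps q) ^ 2 + (ycoord eps p - ycoord eps q) ^ 2).

Definition Gamma (n : nat) (r eps : R) (p : pt) : list pt :=
  filter (fun q => Rleb (dist eps p q) r) (lattice n eps).

Definition Rsum {A : Type} (l : list A) (f : A -> R) : R :=
  fold_right (fun x acc => f x + acc) 0 l.

Definition pi_stat (n : nat) (r eps : R) (p : pt) : R :=
  INR (length (Gamma n r eps p)) /
  Rsum (lattice n eps) (fun q => INR (length (Gamma n r eps q))).

Fixpoint tuple_sum (L : list pt) (w : pt -> R) (k : nat) (f : list pt -> R) : R :=
  match k with
  | O => f []
  | S k' => Rsum L (fun p => w p * tuple_sum L w k' (fun l => f (p :: l)))
  end.

(* probability that n i.i.d. pi-distributed positions P_1..P_n satisfy E *)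
Definition prob_positions (n : nat) (r eps : R) (E : list pt -> bool) : R :=
  tuple_sum (lattice n eps) (pi_stat n r eps) n (fun l => if E l then 1 else 0).

Definition num_cells (n : nat) (Rr : R) : nat :=
  Z.to_nat (Rceil (sqrt (5 * INR n) / Rr)).

Definition cell_side (n : nat) (Rr : R) : R := sqrt (INR n) / INR (num_cells n Rr).

Definition valid_assignment (n : nat) (eps Rr : R) (asg : pt -> nat * nat) : Prop :=
  forall p, In p (lattice n eps) ->
    let m := num_cells n Rr in
    let s := cell_side n Rr in
    (fst (asg p) < m)%nat /\ (snd (asg p) < m)%nat /\
    INR (fst (asg p)) * s <= xcoord eps p <= INR (S (fst (asg p))) * s /\
    INR (snd (asg p)) * s <= ycoord eps p <= INR (S (snd (asg p))) * s.

Definition cell_count (asg : pt -> nat * nat) (a b : nat) (l : list pt) : nat :=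
  length (filter (fun p => andb (Nat.eqb (fst (asg p)) a) (Nat.eqb (snd (asg p)) b)) l).

Definition all_cells_balanced (m : nat) (asg : pt -> nat * nat) (Rr lam : R)
  (l : list pt) : bool :=
  forallb (fun a => forallb (fun b =>
      andb (Rleb (Rr ^ 2 / lam) (INR (cell_count asg a b l)))
      (Rleb (INR (cell_count asg a b l)) (lam * Rr ^ 2)))
    (seq 0 m)) (seq 0 m).

(* The stationary distribution is within a factor 16 of uniform on the
   lattice: whatever the position of p, |Gamma(p)| lies between the number Q
   of lattice offsets in a quarter ball of radius r and 16 Q.  A cell has side
   between Rr/4 and Rr/2, so it holds about (Rr/eps)^2 of the about n/eps^2
   lattice points, and a node falls into it with probability q where
   Rr^2/4096 <= n q <= 16 Rr^2.  The occupancy X of a cell is binomial, and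
   the exponential moments E[exp(-X)] <= exp((1/e - 1) n q) and
   E[exp(X)] <= exp((e - 1) n q) put X outside [Rr^2/lambda, lambda Rr^2] with
   probability at most 2 exp(-Rr^2/lambda) for lambda = 2^14.  A union bound
   over the m^2 <= n/4 cells concludes once Rr^2 >= 300^2 ln n. *)

From Pilot Require Import Defs.
From Stdlib Require Import Reals Lra Lia ZArith List Bool.
Import ListNotations.
Open Scope R_scope.

Lemma Rsum_nil {A} (f : A -> R) : Rsum [] f = 0.
Proof. reflexivity. Qed.

Lemma Rsum_cons {A} (x : A) l f : Rsum (x :: l) f = f x + Rsum l f.
Proof. reflexivity. Qed.

Lemma Rsum_app {A} (l1 l2 : list A) f : Rsum (l1 ++ l2) f = Rsum l1 f + Rsum l2 f.
Proof. induction l1 as [|x l1 IH]; simpl; [lra|]. rewrite IH; lra. Qed.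

Lemma Rsum_map {A B} (g : A -> B) l f : Rsum (map g l) f = Rsum l (fun x => f (g x)).
Proof. induction l as [|x l IH]; simpl; [reflexivity|]. now rewrite IH. Qed.

Lemma Rsum_ext_in {A} (l : list A) f g :
  (forall x, In x l -> f x = g x) -> Rsum l f = Rsum l g.
Proof.
  induction l as [|x l IH]; intros H; [reflexivity|].
  rewrite !Rsum_cons, H, IH; auto with datatypes.
Qed.

Lemma Rsum_le_in {A} (l : list A) f g :
  (forall x, In x l -> f x <= g x) -> Rsum l f <= Rsum l g.
Proof.
  induction l as [|x l IH]; intros H; [simpl; lra|]. rewrite !Rsum_cons.
  apply Rplus_le_compat; [apply H; now left | apply IH; intros; apply H; now right].
Qed.

Lemma Rsum_scal {A} (l : list A) c f : Rsum l (fun x => c * f x) = c * Rsum l f.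
Proof. induction l as [|x l IH]; simpl; [lra|]. rewrite IH; lra. Qed.

Lemma Rsum_plus {A} (l : list A) f g :
  Rsum l (fun x => f x + g x) = Rsum l f + Rsum l g.
Proof. induction l as [|x l IH]; simpl; [lra|]. rewrite IH; lra. Qed.

Lemma Rsum_const {A} (l : list A) c : Rsum l (fun _ => c) = INR (length l) * c.
Proof.
  induction l as [|x l IH]; simpl length; [simpl; lra|].
  rewrite Rsum_cons, IH, S_INR; lra.
Qed.

Lemma Rsum_nonneg {A} (l : list A) f : (forall x, In x l -> 0 <= f x) -> 0 <= Rsum l f.
Proof.
  intros H. replace 0 with (Rsum l (fun _ => 0)) by (rewrite Rsum_const; lra).
  now apply Rsum_le_in.
Qed.

Lemma Rsum_ge_term {A} (l : list A) f y :
  (forall x, In x l -> 0 <= f x) -> In y l -> f y <= Rsum l f.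
Proof.
  induction l as [|x l IH]; intros H Hy; [destruct Hy|]. rewrite Rsum_cons.
  destruct Hy as [->|Hy].
  - assert (0 <= Rsum l f) by (apply Rsum_nonneg; intros; apply H; now right). lra.
  - assert (f y <= Rsum l f) by (apply IH; auto; intros; apply H; now right).
    assert (0 <= f x) by (apply H; now left). lra.
Qed.

Lemma Rsum_list_prod {A B} (l1 : list A) (l2 : list B) F :
  Rsum (list_prod l1 l2) F = Rsum l1 (fun i => Rsum l2 (fun j => F (i, j))).
Proof.
  induction l1 as [|x l1 IH]; simpl list_prod; [reflexivity|].
  now rewrite Rsum_app, Rsum_map, IH, Rsum_cons.
Qed.

Lemma INR_length_filter {A} (f : A -> bool) l :
  INR (length (filter f l)) = Rsum l (fun x => if f x then 1 else 0).
Proof.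
  induction l as [|x l IH]; [reflexivity|]. simpl filter. rewrite Rsum_cons.
  destruct (f x); simpl length; rewrite ?S_INR, IH; lra.
Qed.

Definition psum (n : nat) (f : nat -> R) : R := Rsum (seq 0 n) f.

Lemma psum_0 f : psum 0 f = 0.
Proof. reflexivity. Qed.

Lemma psum_S n f : psum (S n) f = psum n f + f n.
Proof. unfold psum. rewrite seq_S, Rsum_app, Rsum_cons, Rsum_nil. simpl. lra. Qed.

Lemma psum_shift n f : psum (S n) f = f 0%nat + psum n (fun i => f (S i)).
Proof. unfold psum. simpl seq. now rewrite Rsum_cons, <- seq_shift, Rsum_map. Qed.

Lemma psum_nonneg n f : (forall a, 0 <= f a) -> 0 <= psum n f.
Proof. intros; apply Rsum_nonneg; auto. Qed.

Lemma psum_le_len j k f : (forall a, 0 <= f a) -> (j <= k)%nat -> psum j f <= psum k f.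
Proof.
  intros Hf Hjk. induction Hjk as [|k _ IH]; [lra|].
  rewrite psum_S. specialize (Hf k). lra.
Qed.

Lemma psum_le n f g : (forall a, (a < n)%nat -> f a <= g a) -> psum n f <= psum n g.
Proof. intros H. apply Rsum_le_in. intros x Hx. apply in_seq in Hx. apply H. lia. Qed.

Lemma psum_mul n n' u v :
  psum n (fun i => psum n' (fun j => u i * v j)) = psum n u * psum n' v.
Proof.
  unfold psum. rewrite (Rsum_ext_in _ _ (fun i => psum n' v * u i)).
  - rewrite Rsum_scal. unfold psum. ring.
  - intros i _. unfold psum. rewrite Rsum_scal. ring.
Qed.

Lemma psum_le_twice_half (g : nat -> R) K :
  (forall a, 0 <= g a) -> (forall e a, (e <= a)%nat -> g a <= g e) ->
  psum (S K) g <= 2 * psum (K / 2 + 1) g.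
Proof.
  intros Hg Hdec.
  assert (Hdouble : forall m, psum (2 * m) g <= 2 * psum m g).
  { induction m as [|m IH]; [rewrite Nat.mul_0_r, !psum_0; lra|].
    replace (2 * S m)%nat with (S (S (2 * m))) by lia. rewrite !psum_S.
    assert (g (2 * m)%nat <= g m) by (apply Hdec; lia).
    assert (g (S (2 * m)) <= g m) by (apply Hdec; lia). lra. }
  eapply Rle_trans; [|apply Hdouble]. apply psum_le_len; auto.
  pose proof (Nat.div_mod K 2 ltac:(lia)). pose proof (Nat.mod_upper_bound K 2 ltac:(lia)).
  lia.
Qed.

Definition nat_dist (i q : nat) : nat := ((i - q) + (q - i))%nat.

Section DistanceSums.
Variable h : nat -> R.
Hypothesis h_nonneg : forall a, 0 <= h a.

Definition dist_sum (n q : nat) : R := psum n (fun i => h (nat_dist i q)).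

Lemma dist_sum_S_S n q : dist_sum (S n) (S q) = h (S q) + dist_sum n q.
Proof. unfold dist_sum. now rewrite psum_shift. Qed.

Lemma dist_sum_0 n : dist_sum n 0 = psum n h.
Proof.
  unfold dist_sum, psum. apply Rsum_ext_in. intros i _. unfold nat_dist. f_equal. lia.
Qed.

Lemma dist_sum_le n q : dist_sum n q <= psum n h + psum q (fun a => h (S a)).
Proof.
  revert n. induction q as [|q IH]; intros n.
  - rewrite dist_sum_0, psum_0. lra.
  - destruct n as [|n].
    + unfold dist_sum. rewrite !psum_0.
      pose proof (psum_nonneg (S q) (fun a => h (S a)) (fun a => h_nonneg _)). lra.
    + rewrite dist_sum_S_S, (psum_S q). specialize (IH n).
      assert (psum n h <= psum (S n) h) by (apply psum_le_len; auto). lra.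
Qed.

Lemma dist_sum_le_twice n q : (q < n)%nat -> dist_sum n q <= 2 * psum n h.
Proof.
  intros Hq. pose proof (dist_sum_le n q).
  assert (psum q (fun a => h (S a)) <= psum n h).
  { pose proof (h_nonneg 0).
    apply Rle_trans with (h 0%nat + psum q (fun a => h (S a))); [lra|].
    rewrite <- psum_shift. apply psum_le_len; auto. }
  lra.
Qed.

Lemma dist_sum_ge_left n q : psum (n - q) h <= dist_sum n q.
Proof.
  revert n. induction q as [|q IH]; intros n.
  - rewrite dist_sum_0, Nat.sub_0_r. lra.
  - destruct n as [|n]; [unfold dist_sum; simpl; rewrite !psum_0; lra|].
    rewrite dist_sum_S_S. specialize (IH n). specialize (h_nonneg (S q)). simpl. lra.
Qed.

Lemma dist_sum_ge_right n q : (q < n)%nat -> psum (S q) h <= dist_sum n q.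
Proof.
  revert n. induction q as [|q IH]; intros n Hn.
  - rewrite dist_sum_0. apply psum_le_len; auto.
  - destruct n as [|n]; [lia|].
    rewrite dist_sum_S_S, psum_S. specialize (IH n ltac:(lia)). lra.
Qed.

(* One side of [q] in [0, K] contains at least [K/2 + 1] points. *)
Lemma dist_sum_ge_half K q : (q <= K)%nat -> psum (K / 2 + 1) h <= dist_sum (S K) q.
Proof.
  intros Hq.
  pose proof (Nat.div_mod K 2 ltac:(lia)). pose proof (Nat.mod_upper_bound K 2 ltac:(lia)).
  destruct (le_lt_dec q (K / 2)).
  - eapply Rle_trans; [|apply dist_sum_ge_left]. apply psum_le_len; auto. lia.
  - eapply Rle_trans; [|apply dist_sum_ge_right; lia]. apply psum_le_len; auto. lia.
Qed.
End DistanceSums.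

Definition Rprod {A} (G : A -> R) (l : list A) : R := fold_right (fun x a => G x * a) 1 l.

Lemma Rprod_pos {A} (G : A -> R) l : (forall p, 0 < G p) -> 0 < Rprod G l.
Proof. intros H. induction l; simpl; [lra|]. now apply Rmult_lt_0_compat. Qed.

Lemma exp_Rsum {A} (g : A -> R) t l : exp (t * Rsum l g) = Rprod (fun p => exp (t * g p)) l.
Proof.
  induction l as [|x l IH]; simpl Rprod.
  - now rewrite Rsum_nil, Rmult_0_r, exp_0.
  - rewrite Rsum_cons, <- IH, <- exp_plus. f_equal. ring.
Qed.

Section TupleSums.
Variable L : list pt.
Variable w : pt -> R.

Lemma tuple_sum_S k f :
  tuple_sum L w (S k) f = Rsum L (fun p => w p * tuple_sum L w k (fun l => f (p :: l))).
Proof. reflexivity. Qed.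

Lemma tuple_sum_ext k : forall f g, (forall l, f l = g l) -> tuple_sum L w k f = tuple_sum L w k g.
Proof.
  induction k as [|k IH]; intros f g H; [apply H|]. rewrite !tuple_sum_S.
  apply Rsum_ext_in. intros. f_equal. apply IH. intros; apply H.
Qed.

Lemma tuple_sum_scal k : forall c f, tuple_sum L w k (fun l => c * f l) = c * tuple_sum L w k f.
Proof.
  induction k as [|k IH]; intros c f; [reflexivity|]. rewrite !tuple_sum_S, <- Rsum_scal.
  apply Rsum_ext_in. intros p _. rewrite (IH c (fun l => f (p :: l))). ring.
Qed.

Lemma tuple_sum_plus k : forall f g,
  tuple_sum L w k (fun l => f l + g l) = tuple_sum L w k f + tuple_sum L w k g.
Proof.
  induction k as [|k IH]; intros f g; [reflexivity|]. rewrite !tuple_sum_S, <- Rsum_plus.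
  apply Rsum_ext_in. intros p _. rewrite (IH (fun l => f (p :: l)) (fun l => g (p :: l))). ring.
Qed.

(* Independence: the expectation of a product over the coordinates factorises. *)
Lemma tuple_sum_Rprod k : forall G,
  tuple_sum L w k (Rprod G) = (Rsum L (fun p => w p * G p)) ^ k.
Proof.
  induction k as [|k IH]; intros G; [reflexivity|]. rewrite tuple_sum_S. simpl pow.
  rewrite Rmult_comm, <- Rsum_scal. apply Rsum_ext_in. intros p _.
  rewrite (tuple_sum_ext k _ (fun l => G p * Rprod G l)) by reflexivity.
  rewrite tuple_sum_scal, IH. ring.
Qed.

Lemma tuple_sum_const k c : tuple_sum L w k (fun _ => c) = c * (Rsum L w) ^ k.
Proof.
  assert (Hone : forall l, Rprod (fun _ : pt => 1) l = 1)
    by (induction l as [|x l IH]; simpl; [|rewrite IH]; ring).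
  rewrite (tuple_sum_ext k _ (fun l => c * Rprod (fun _ => 1) l)) by (intros; rewrite Hone; ring).
  rewrite tuple_sum_scal, tuple_sum_Rprod. do 2 f_equal.
  apply Rsum_ext_in; intros; ring.
Qed.

Lemma tuple_sum_Rsum {A} (C : list A) k F :
  tuple_sum L w k (fun l => Rsum C (fun c => F c l)) = Rsum C (fun c => tuple_sum L w k (F c)).
Proof.
  induction C as [|a C IH].
  - rewrite Rsum_nil, (tuple_sum_ext k _ (fun _ => 0)) by reflexivity.
    rewrite tuple_sum_const. ring.
  - rewrite Rsum_cons, (tuple_sum_ext k _ (fun l => F a l + Rsum C (fun c => F c l))) by reflexivity.
    now rewrite tuple_sum_plus, IH.
Qed.

Hypothesis w_nonneg : forall p, In p L -> 0 <= w p.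

Lemma tuple_sum_le k : forall f g, (forall l, f l <= g l) -> tuple_sum L w k f <= tuple_sum L w k g.
Proof.
  induction k as [|k IH]; intros f g H; [apply H|]. rewrite !tuple_sum_S.
  apply Rsum_le_in. intros. apply Rmult_le_compat_l; auto.
Qed.
End TupleSums.

Lemma sqr_nat_dist (i q : nat) e : (INR q * e - INR i * e) ^ 2 = (INR (nat_dist i q) * e) ^ 2.
Proof.
  unfold nat_dist. destruct (le_lt_dec i q).
  - replace (i - q)%nat with 0%nat by lia. rewrite Nat.add_0_l, minus_INR by lia. ring.
  - replace (q - i)%nat with 0%nat by lia. rewrite Nat.add_0_r, minus_INR by lia. ring.
Qed.

Lemma in_lattice n eps i j :
  In (i, j) (lattice n eps) <-> (i <= lat_bound n eps /\ j <= lat_bound n eps)%nat.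
Proof. unfold lattice. rewrite in_prod_iff, !in_seq. lia. Qed.

Section StationaryDistribution.
Variables (n : nat) (r eps : R).
Hypothesis eps_pos : 0 < eps.
Hypothesis r_nonneg : 0 <= r.
Let K := lat_bound n eps.
Let M := (K / 2 + 1)%nat.

Definition ball_ind (a b : nat) : R :=
  if Rleb (sqrt ((INR a * eps) ^ 2 + (INR b * eps) ^ 2)) r then 1 else 0.

Lemma ball_ind_range a b : 0 <= ball_ind a b <= 1.
Proof. unfold ball_ind. destruct (Rleb _ _); lra. Qed.

Lemma ball_ind_antimono a b a' b' : (a <= a')%nat -> (b <= b')%nat -> ball_ind a' b' <= ball_ind a b.
Proof.
  intros Ha Hb. unfold ball_ind, Rleb.
  destruct (Rle_dec (sqrt ((INR a' * eps) ^ 2 + (INR b' * eps) ^ 2)) r) as [H|H];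
  destruct (Rle_dec (sqrt ((INR a * eps) ^ 2 + (INR b * eps) ^ 2)) r) as [H'|H']; try lra.
  exfalso. apply H'. eapply Rle_trans; [|apply H]. apply sqrt_le_1_alt.
  apply le_INR in Ha. apply le_INR in Hb. pose proof (pos_INR a). pose proof (pos_INR b).
  apply Rplus_le_compat; apply pow_incr; split; nra.
Qed.

Lemma ball_ind_00 : ball_ind 0 0 = 1.
Proof.
  unfold ball_ind, Rleb. simpl INR.
  replace ((0 * eps) ^ 2 + (0 * eps) ^ 2) with 0 by ring.
  rewrite sqrt_0. destruct (Rle_dec 0 r); lra.
Qed.

Lemma Gamma_length p : INR (length (Gamma n r eps p)) =
  psum (S K) (fun i => psum (S K) (fun j => ball_ind (nat_dist i (fst p)) (nat_dist j (snd p)))).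
Proof.
  unfold Gamma. rewrite INR_length_filter. unfold lattice. rewrite (@Rsum_list_prod nat nat).
  unfold psum. apply Rsum_ext_in. intros i _. apply Rsum_ext_in. intros j _.
  unfold ball_ind, Defs.dist, xcoord, ycoord. destruct p as [p1 p2]; simpl fst; simpl snd.
  now rewrite !sqr_nat_dist.
Qed.

Definition ball_row (a : nat) : R := psum M (ball_ind a).

Definition quarter_ball : R := psum M ball_row.

Lemma ball_row_nonneg a : 0 <= ball_row a.
Proof. apply psum_nonneg. intros; apply ball_ind_range. Qed.

Lemma ball_row_antimono e a : (e <= a)%nat -> ball_row a <= ball_row e.
Proof. intros. apply psum_le. intros. apply ball_ind_antimono; lia. Qed.

Lemma quarter_ball_ge_1 : 1 <= quarter_ball.
Proof.
  unfold quarter_ball, M. rewrite Nat.add_1_r, psum_shift.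
  assert (1 <= ball_row 0).
  { unfold ball_row, M. rewrite Nat.add_1_r, psum_shift, ball_ind_00.
    pose proof (psum_nonneg (K / 2) (fun i => ball_ind 0 (S i)) ltac:(intros; apply ball_ind_range)).
    lra. }
  pose proof (psum_nonneg (K / 2) (fun i => ball_row (S i)) ltac:(intros; apply ball_row_nonneg)).
  lra.
Qed.

(* In each coordinate: the offsets from p cover [0, K] at most twice, and by
   monotonicity [0, K] counts at most twice [0, K/2]. *)
Lemma Gamma_length_le p : In p (lattice n eps) -> INR (length (Gamma n r eps p)) <= 16 * quarter_ball.
Proof.
  destruct p as [p1 p2]. rewrite in_lattice. fold K. intros [H1 H2].
  rewrite Gamma_length. simpl fst; simpl snd.
  apply Rle_trans with (psum (S K) (fun i => 4 * ball_row (nat_dist i p1))).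
  - apply psum_le. intros i _.
    change (psum (S K) (fun j => ball_ind (nat_dist i p1) (nat_dist j p2)))
      with (dist_sum (ball_ind (nat_dist i p1)) (S K) p2).
    eapply Rle_trans; [apply dist_sum_le_twice; [intros; apply ball_ind_range | lia]|].
    pose proof (psum_le_twice_half (ball_ind (nat_dist i p1)) K (fun a => proj1 (ball_ind_range _ a))
      (fun e a H => ball_ind_antimono _ _ _ _ (le_n _) H)) as Hhalf.
    unfold ball_row. fold M in Hhalf. lra.
  - unfold psum at 1. rewrite Rsum_scal.
    change (Rsum (seq 0 (S K)) (fun i => ball_row (nat_dist i p1))) with (dist_sum ball_row (S K) p1).
    pose proof (dist_sum_le_twice ball_row ball_row_nonneg (S K) p1 ltac:(lia)).
    pose proof (psum_le_twice_half ball_row K ball_row_nonneg ball_row_antimono) as Hhalf.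
    unfold quarter_ball. fold M in Hhalf. lra.
Qed.

Lemma Gamma_length_ge p : In p (lattice n eps) -> quarter_ball <= INR (length (Gamma n r eps p)).
Proof.
  destruct p as [p1 p2]. rewrite in_lattice. fold K. intros [H1 H2].
  rewrite Gamma_length. simpl fst; simpl snd.
  apply Rle_trans with (dist_sum ball_row (S K) p1).
  - apply dist_sum_ge_half; auto. apply ball_row_nonneg.
  - apply psum_le. intros i _.
    apply (dist_sum_ge_half (ball_ind (nat_dist i p1))); auto. intros; apply ball_ind_range.
Qed.

Definition lattice_size : R := INR (length (lattice n eps)).

Lemma lattice_size_eq : lattice_size = INR (S K) * INR (S K).
Proof. unfold lattice_size, lattice. now rewrite (@length_prod nat nat), length_seq, mult_INR. Qed.

Lemma lattice_size_ge_1 : 1 <= lattice_size.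
Proof. rewrite lattice_size_eq, S_INR. pose proof (pos_INR K). nra. Qed.

Definition Gamma_total : R := Rsum (lattice n eps) (fun q => INR (length (Gamma n r eps q))).

Lemma Gamma_total_bounds : lattice_size * quarter_ball <= Gamma_total <= lattice_size * (16 * quarter_ball).
Proof.
  unfold Gamma_total, lattice_size. rewrite <- !Rsum_const.
  split; apply Rsum_le_in; intros.
  - now apply Gamma_length_ge.
  - now apply Gamma_length_le.
Qed.

Lemma pi_stat_ge p : In p (lattice n eps) -> 1 / (16 * lattice_size) <= pi_stat n r eps p.
Proof.
  intros Hp. unfold pi_stat. fold Gamma_total.
  pose proof Gamma_total_bounds. pose proof quarter_ball_ge_1. pose proof lattice_size_ge_1.
  pose proof (Gamma_length_ge p Hp). unfold Rdiv.
  apply Rmult_le_reg_r with (16 * lattice_size * Gamma_total); [nra|].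
  field_simplify; nra.
Qed.

Lemma pi_stat_le p : In p (lattice n eps) -> pi_stat n r eps p <= 16 / lattice_size.
Proof.
  intros Hp. unfold pi_stat. fold Gamma_total.
  pose proof Gamma_total_bounds. pose proof quarter_ball_ge_1. pose proof lattice_size_ge_1.
  pose proof (Gamma_length_le p Hp). unfold Rdiv.
  apply Rmult_le_reg_r with (lattice_size * Gamma_total); [nra|].
  field_simplify; nra.
Qed.

Lemma pi_stat_nonneg p : In p (lattice n eps) -> 0 <= pi_stat n r eps p.
Proof.
  intros Hp. pose proof (pi_stat_ge p Hp). pose proof lattice_size_ge_1.
  assert (0 < 1 / (16 * lattice_size)) by (apply Rdiv_lt_0_compat; lra). lra.
Qed.

Lemma pi_stat_sum : Rsum (lattice n eps) (pi_stat n r eps) = 1.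
Proof.
  unfold pi_stat. fold Gamma_total.
  pose proof Gamma_total_bounds. pose proof quarter_ball_ge_1. pose proof lattice_size_ge_1.
  unfold Rdiv. rewrite (Rsum_ext_in _ _ (fun x => / Gamma_total * INR (length (Gamma n r eps x))))
    by (intros; ring).
  rewrite Rsum_scal. fold Gamma_total. field. nra.
Qed.
End StationaryDistribution.

Definition open_ind (x y : R) (i : nat) : R :=
  if Rlt_dec x (INR i) then if Rlt_dec (INR i) y then 1 else 0 else 0.

Definition closed_ind (x y : R) (i : nat) : R :=
  if Rle_dec x (INR i) then if Rle_dec (INR i) y then 1 else 0 else 0.

Lemma open_ind_cases x y i : open_ind x y i = 0 \/ (open_ind x y i = 1 /\ x < INR i < y).
Proof.
  unfold open_ind. destruct (Rlt_dec x (INR i)); destruct (Rlt_dec (INR i) y); auto.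
Qed.

Lemma open_ind_range x y i : 0 <= open_ind x y i <= 1.
Proof. destruct (open_ind_cases x y i) as [->|[-> _]]; lra. Qed.

Lemma closed_ind_range x y i : 0 <= closed_ind x y i <= 1.
Proof. unfold closed_ind. destruct (Rle_dec x (INR i)); destruct (Rle_dec (INR i) y); lra. Qed.

Lemma psum_open_ind_ge x y N z :
  0 <= x -> z <= INR N -> z <= y -> z - x - 1 <= psum N (open_ind x y).
Proof.
  intros Hx. revert z. induction N as [|N IH]; intros z Hz Hzy.
  - rewrite psum_0. simpl in Hz. lra.
  - rewrite psum_S. rewrite S_INR in Hz.
    pose proof (psum_nonneg N (open_ind x y) (fun a => proj1 (open_ind_range x y a))).
    pose proof (open_ind_range x y N).
    destruct (Rle_dec z (INR N)) as [HzN|HzN]; [pose proof (IH z HzN Hzy); lra|].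
    destruct (Rlt_dec x (INR N)); [|lra].
    assert (open_ind x y N = 1) by (unfold open_ind;
      destruct (Rlt_dec x (INR N)); destruct (Rlt_dec (INR N) y); lra).
    pose proof (IH (INR N) (Rle_refl _) ltac:(lra)). lra.
Qed.

Lemma psum_closed_ind_le x y N : x <= y -> psum N (closed_ind x y) <= y - x + 1.
Proof.
  intros Hxy.
  assert (Hgen : forall N, psum N (closed_ind x y) <= Rmax 0 (Rmin (INR N) (y + 1) - x)).
  { induction N0 as [|N0 IH]; [rewrite psum_0; apply Rmax_l|].
    rewrite psum_S, S_INR. unfold closed_ind at 2. revert IH. unfold Rmax, Rmin.
    destruct (Rle_dec x (INR N0)); destruct (Rle_dec (INR N0) y); intros;
    repeat match goal with
      | |- context [Rle_dec ?a ?b] => destruct (Rle_dec a b)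
      | H : context [Rle_dec ?a ?b] |- _ => destruct (Rle_dec a b) end; lra. }
  eapply Rle_trans; [apply Hgen|]. unfold Rmax, Rmin.
  repeat match goal with |- context [Rle_dec ?a ?b] => destruct (Rle_dec a b) end; lra.
Qed.

Lemma INR_Z_to_nat z : (0 <= z)%Z -> INR (Z.to_nat z) = IZR z.
Proof. intros. rewrite INR_IZR_INZ, Z2Nat.id; auto. Qed.

Lemma lat_bound_spec n eps : 0 < eps ->
  INR (lat_bound n eps) <= sqrt (INR n) / eps < INR (lat_bound n eps) + 1.
Proof.
  intros He. unfold lat_bound, Rfloor. set (v := sqrt (INR n) / eps).
  assert (0 <= v) by (apply Rmult_le_pos; [apply sqrt_pos | left; now apply Rinv_0_lt_compat]).
  destruct (archimed v) as [H1 H2].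
  assert (0 < up v)%Z by (apply lt_IZR; simpl; lra).
  rewrite INR_Z_to_nat by lia. rewrite minus_IZR. simpl. lra.
Qed.

Lemma num_cells_spec n Rr : 0 < sqrt (5 * INR n) / Rr ->
  sqrt (5 * INR n) / Rr <= INR (num_cells n Rr) < sqrt (5 * INR n) / Rr + 1.
Proof.
  intros Hv. unfold num_cells, Rceil, Rfloor. set (v := sqrt (5 * INR n) / Rr) in *.
  destruct (archimed (- v)) as [H1 H2].
  assert (0 < - (up (- v) - 1))%Z by (apply lt_IZR; rewrite opp_IZR, minus_IZR; simpl; lra).
  rewrite INR_Z_to_nat by lia. rewrite opp_IZR, minus_IZR. simpl. lra.
Qed.

Lemma sqrt5_bounds : 2 <= sqrt 5 <= 3.
Proof.
  split; [rewrite <- (sqrt_square 2) by lra | rewrite <- (sqrt_square 3) by lra];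
  apply sqrt_le_1_alt; lra.
Qed.

Lemma Rdiv_lt_mult x t e : 0 < e -> x / e < t -> x < t * e.
Proof. intros He H. replace x with (x / e * e) by (field; lra). now apply Rmult_lt_compat_r. Qed.

Lemma Rlt_div_mult x t e : 0 < e -> t < x / e -> t * e < x.
Proof. intros He H. replace x with (x / e * e) by (field; lra). now apply Rmult_lt_compat_r. Qed.

Lemma Rdiv_le_of_mult x t e : 0 < e -> x <= t * e -> x / e <= t.
Proof.
  intros He H. replace t with (t * e / e) by (field; lra).
  apply Rmult_le_compat_r; [left; now apply Rinv_0_lt_compat | exact H].
Qed.

Lemma Rle_div_of_mult x t e : 0 < e -> t * e <= x -> t <= x / e.
Proof.
  intros He H. replace t with (t * e / e) by (field; lra).
  apply Rmult_le_compat_r; [left; now apply Rinv_0_lt_compat | exact H].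
Qed.

Definition in_cell (asg : pt -> nat * nat) (a b : nat) (p : pt) : R :=
  if andb (Nat.eqb (fst (asg p)) a) (Nat.eqb (snd (asg p)) b) then 1 else 0.

Lemma in_cell_range asg a b p : 0 <= in_cell asg a b p <= 1.
Proof. unfold in_cell. destruct (_ && _)%bool; lra. Qed.

Lemma cell_index_unique s x a a' : 0 < s ->
  INR a * s < x < INR (S a) * s -> INR a' * s <= x <= INR (S a') * s -> a' = a.
Proof.
  intros Hs H1 H2.
  assert (INR a' < INR (S a)) by (apply (Rmult_lt_reg_r s); auto; lra).
  assert (INR a < INR (S a')) by (apply (Rmult_lt_reg_r s); auto; lra).
  apply INR_lt in H. apply INR_lt in H0. lia.
Qed.

Section CellSide.
Variables (n : nat) (Rr : R).
Hypothesis Rr_ge_8 : 8 <= Rr.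
Hypothesis Rr_le_sqrt_n : Rr <= sqrt (INR n).
Let m := num_cells n Rr.
Let s := cell_side n Rr.

Lemma num_cells_bounds : sqrt 5 * sqrt (INR n) / Rr <= INR m <= 4 * sqrt (INR n) / Rr.
Proof.
  pose proof sqrt5_bounds.
  assert (H5n : sqrt (5 * INR n) = sqrt 5 * sqrt (INR n)) by (apply sqrt_mult; [lra | apply pos_INR]).
  assert (Hv : 0 < sqrt (5 * INR n) / Rr) by (rewrite H5n; apply Rdiv_lt_0_compat; nra).
  pose proof (num_cells_spec n Rr Hv) as Hm. fold m in Hm. rewrite H5n in Hm. split; [lra|].
  assert (1 <= sqrt (INR n) / Rr) by (apply Rle_div_of_mult; lra).
  assert (sqrt 5 * sqrt (INR n) / Rr <= 3 * (sqrt (INR n) / Rr)).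
  { unfold Rdiv. rewrite <- Rmult_assoc. apply Rmult_le_compat_r; [left; apply Rinv_0_lt_compat|]; nra. }
  unfold Rdiv in *. lra.
Qed.

Lemma num_cells_pos : 0 < INR m.
Proof.
  pose proof sqrt5_bounds. destruct num_cells_bounds as [Hm _].
  eapply Rlt_le_trans; [|exact Hm]. apply Rdiv_lt_0_compat; nra.
Qed.

Lemma num_cells_mult_side : INR m * s = sqrt (INR n).
Proof. unfold s, cell_side. fold m. pose proof num_cells_pos. field. lra. Qed.

Lemma cell_side_bounds : Rr / 4 <= s <= Rr / 2.
Proof.
  pose proof sqrt5_bounds. destruct num_cells_bounds as [Hm1 Hm2].
  pose proof num_cells_pos. pose proof num_cells_mult_side.
  assert (2 * sqrt (INR n) <= INR m * Rr).
  { apply Rle_trans with (sqrt 5 * sqrt (INR n)); [nra|].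
    apply (Rmult_le_compat_r Rr) in Hm1; [|lra].
    replace (sqrt 5 * sqrt (INR n) / Rr * Rr) with (sqrt 5 * sqrt (INR n)) in Hm1 by (field; lra).
    lra. }
  assert (INR m * Rr <= 4 * sqrt (INR n)).
  { apply (Rmult_le_compat_r Rr) in Hm2; [|lra].
    replace (4 * sqrt (INR n) / Rr * Rr) with (4 * sqrt (INR n)) in Hm2 by (field; lra). lra. }
  split; nra.
Qed.

End CellSide.

Lemma lat_bound_bounds n eps : 0 < eps -> eps <= sqrt (INR n) ->
  sqrt (INR n) < (INR (lat_bound n eps) + 1) * eps <= 2 * sqrt (INR n).
Proof.
  intros Heps Hepsn. destruct (lat_bound_spec n eps Heps) as [H1 H2]. split.
  - now apply Rdiv_lt_mult.
  - apply (Rmult_le_compat_r eps) in H1; [|lra].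
    replace (sqrt (INR n) / eps * eps) with (sqrt (INR n)) in H1 by (field; lra). lra.
Qed.

Section Cells.
Variables (n : nat) (eps Rr : R) (asg : pt -> nat * nat).
Hypothesis eps_pos : 0 < eps.
Hypothesis eps_le_1 : eps <= 1.
Hypothesis Rr_ge_8 : 8 <= Rr.
Hypothesis Rr_le_sqrt_n : Rr <= sqrt (INR n).
Hypothesis asg_valid : valid_assignment n eps Rr asg.
Let K := lat_bound n eps.
Let m := num_cells n Rr.
Let s := cell_side n Rr.

Lemma asg_at i j : (i <= K)%nat -> (j <= K)%nat ->
  INR (fst (asg (i, j))) * s <= INR i * eps <= INR (S (fst (asg (i, j)))) * s /\
  INR (snd (asg (i, j))) * s <= INR j * eps <= INR (S (snd (asg (i, j)))) * s.
Proof. intros Hi Hj. apply (asg_valid (i, j)). now apply in_lattice. Qed.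

(* The lattice points strictly inside cell (a, b) form a grid with more than
   s/eps - 1 points per side. *)
Lemma cell_card_ge a b : (a < m)%nat -> (b < m)%nat ->
  (s / eps - 1) ^ 2 <= Rsum (lattice n eps) (in_cell asg a b).
Proof.
  intros Ha Hb. pose proof (cell_side_bounds n Rr Rr_ge_8 Rr_le_sqrt_n) as Hs.
  pose proof (num_cells_mult_side n Rr Rr_ge_8 Rr_le_sqrt_n) as Hms. fold s m in Hs, Hms.
  set (xa := INR a * s / eps). set (ya := INR (S a) * s / eps).
  set (xb := INR b * s / eps). set (yb := INR (S b) * s / eps).
  unfold lattice. rewrite (@Rsum_list_prod nat nat). fold K.
  apply Rle_trans with (psum (S K) (fun i => psum (S K) (fun j => open_ind xa ya i * open_ind xb yb j))).
  2:{ apply psum_le. intros i Hi. apply psum_le. intros j Hj.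
      destruct (open_ind_cases xa ya i) as [->|[-> [H1 H2]]]; [rewrite Rmult_0_l; apply in_cell_range|].
      destruct (open_ind_cases xb yb j) as [->|[-> [H3 H4]]]; [rewrite Rmult_0_r; apply in_cell_range|].
      destruct (asg_at i j ltac:(lia) ltac:(lia)) as [Hx Hy].
      unfold xa, ya, xb, yb in *.
      apply Rdiv_lt_mult in H1, H3; auto. apply Rlt_div_mult in H2, H4; auto.
      assert (Hai : fst (asg (i, j)) = a) by (apply (cell_index_unique s (INR i * eps)); lra).
      assert (Hbj : snd (asg (i, j)) = b) by (apply (cell_index_unique s (INR j * eps)); lra).
      unfold in_cell. rewrite Hai, Hbj, !Nat.eqb_refl. simpl. lra. }
  rewrite psum_mul.
  assert (Hy : forall c, (c < m)%nat -> INR (S c) * s / eps <= INR (S K)).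
  { intros c Hc. apply Rdiv_le_of_mult; auto.
    pose proof (lat_bound_bounds n eps eps_pos ltac:(lra)) as HK. fold K in HK. rewrite (S_INR K).
    apply Rle_trans with (INR m * s); [|lra].
    apply Rmult_le_compat_r; [lra|]. apply le_INR. lia. }
  assert (Hwidth : forall c, INR (S c) * s / eps - INR c * s / eps - 1 = s / eps - 1)
    by (intros; rewrite S_INR; field; lra).
  assert (Hnn : forall c, 0 <= INR c * s / eps).
  { intros. apply Rmult_le_pos; [apply Rmult_le_pos; [apply pos_INR | lra]|].
    left; now apply Rinv_0_lt_compat. }
  pose proof (psum_open_ind_ge xa ya (S K) ya (Hnn a) (Hy a Ha) (Rle_refl _)) as Hca.
  pose proof (psum_open_ind_ge xb yb (S K) yb (Hnn b) (Hy b Hb) (Rle_refl _)) as Hcb.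
  unfold xa, ya, xb, yb in *. rewrite Hwidth in Hca, Hcb.
  assert (1 <= s / eps) by (apply Rle_div_of_mult; lra).
  unfold pow. rewrite Rmult_1_r. apply Rmult_le_compat; lra.
Qed.

Lemma cell_card_le a b : Rsum (lattice n eps) (in_cell asg a b) <= (s / eps + 1) ^ 2.
Proof.
  pose proof (cell_side_bounds n Rr Rr_ge_8 Rr_le_sqrt_n) as Hs. fold s in Hs.
  set (xa := INR a * s / eps). set (ya := INR (S a) * s / eps).
  set (xb := INR b * s / eps). set (yb := INR (S b) * s / eps).
  unfold lattice. rewrite (@Rsum_list_prod nat nat). fold K.
  apply Rle_trans with (psum (S K) (fun i => psum (S K) (fun j => closed_ind xa ya i * closed_ind xb yb j))).
  { apply psum_le. intros i Hi. apply psum_le. intros j Hj.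
    pose proof (closed_ind_range xa ya i). pose proof (closed_ind_range xb yb j).
    unfold in_cell.
    destruct (Nat.eqb (fst (asg (i, j))) a) eqn:E1; [|simpl; nra].
    destruct (Nat.eqb (snd (asg (i, j))) b) eqn:E2; [|simpl; nra].
    apply Nat.eqb_eq in E1, E2. simpl.
    destruct (asg_at i j ltac:(lia) ltac:(lia)) as [Hx Hy]. rewrite E1 in Hx. rewrite E2 in Hy.
    unfold closed_ind, xa, ya, xb, yb.
    repeat match goal with |- context [Rle_dec ?a ?b] => destruct (Rle_dec a b) end; try lra;
    exfalso; match goal with H : ~ _ |- _ => apply H end;
    first [apply Rdiv_le_of_mult | apply Rle_div_of_mult]; auto; lra. }
  rewrite psum_mul.
  assert (Hwidth : forall c, INR (S c) * s / eps - INR c * s / eps + 1 = s / eps + 1)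
    by (intros; rewrite S_INR; field; lra).
  assert (Hxy : forall c, INR c * s / eps <= INR (S c) * s / eps).
  { intros. apply Rmult_le_compat_r; [left; now apply Rinv_0_lt_compat|].
    apply Rmult_le_compat_r; [lra|]. apply le_INR; lia. }
  pose proof (psum_closed_ind_le xa ya (S K) (Hxy a)) as Hca.
  pose proof (psum_closed_ind_le xb yb (S K) (Hxy b)) as Hcb.
  unfold xa, ya, xb, yb in *. rewrite Hwidth in Hca, Hcb.
  pose proof (psum_nonneg (S K) (closed_ind (INR a * s / eps) (INR (S a) * s / eps))
    (fun i => proj1 (closed_ind_range _ _ i))).
  pose proof (psum_nonneg (S K) (closed_ind (INR b * s / eps) (INR (S b) * s / eps))
    (fun i => proj1 (closed_ind_range _ _ i))).
  unfold pow. rewrite Rmult_1_r. apply Rmult_le_compat; lra.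
Qed.
End Cells.

Definition cell_mass (n : nat) (r eps : R) (asg : pt -> nat * nat) (a b : nat) : R :=
  Rsum (lattice n eps) (fun p => pi_stat n r eps p * in_cell asg a b p).

Lemma Rdiv_le_compat x y u v : 0 <= u <= x -> 0 < y <= v -> u / v <= x / y.
Proof.
  intros. apply Rmult_le_compat; try lra.
  - left; apply Rinv_0_lt_compat; lra.
  - apply Rinv_le_contravar; lra.
Qed.

Section CellMass.
Variables (n : nat) (r eps Rr : R) (asg : pt -> nat * nat).
Hypothesis r_nonneg : 0 <= r.
Hypothesis eps_pos : 0 < eps.
Hypothesis eps_le_1 : eps <= 1.
Hypothesis Rr_ge_8 : 8 <= Rr.
Hypothesis Rr_le_sqrt_n : Rr <= sqrt (INR n).
Hypothesis asg_valid : valid_assignment n eps Rr asg.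
Let k1 := INR (lat_bound n eps) + 1.
Let s := cell_side n Rr.
Let N a b := Rsum (lattice n eps) (in_cell asg a b).

Lemma lattice_size_sqr : lattice_size n eps = k1 * k1.
Proof. rewrite lattice_size_eq, S_INR. reflexivity. Qed.

Lemma cell_mass_bounds_card a b :
  N a b / (16 * (k1 * k1)) <= cell_mass n r eps asg a b <= 16 / (k1 * k1) * N a b.
Proof.
  rewrite <- lattice_size_sqr. unfold cell_mass, N. unfold Rdiv at 1.
  rewrite Rmult_comm, <- !Rsum_scal. split; apply Rsum_le_in; intros p Hp;
  pose proof (pi_stat_ge n r eps eps_pos r_nonneg p Hp);
  pose proof (pi_stat_le n r eps eps_pos r_nonneg p Hp);
  pose proof (pi_stat_nonneg n r eps eps_pos r_nonneg p Hp);
  pose proof (in_cell_range asg a b p); unfold Rdiv in *; nra.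
Qed.

(* [(K+1) eps <= 2 sqrt n] and [s - eps >= Rr/8]. *)
Lemma cell_mass_ge a b : (a < num_cells n Rr)%nat -> (b < num_cells n Rr)%nat ->
  Rr ^ 2 / 4096 <= INR n * cell_mass n r eps asg a b.
Proof.
  intros Ha Hb.
  pose proof (cell_card_ge n eps Rr asg eps_pos eps_le_1 Rr_ge_8 Rr_le_sqrt_n asg_valid a b Ha Hb) as HN.
  pose proof (cell_side_bounds n Rr Rr_ge_8 Rr_le_sqrt_n) as Hs.
  pose proof (lat_bound_bounds n eps eps_pos ltac:(lra)) as HK.
  fold k1 s N in HN, Hs, HK |- *.
  destruct (cell_mass_bounds_card a b) as [Hq _].
  assert (Hk1 : 0 < k1) by (unfold k1; pose proof (pos_INR (lat_bound n eps)); lra).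
  assert (Hsq : sqrt (INR n) * sqrt (INR n) = INR n) by (apply sqrt_sqrt, pos_INR).
  assert (Hu : Rr / 8 <= (s / eps - 1) * eps) by (unfold Rdiv; field_simplify; lra).
  apply Rle_trans with (INR n * (N a b / (16 * (k1 * k1)))).
  2:{ apply Rmult_le_compat_l; [apply pos_INR | exact Hq]. }
  apply Rle_trans with (INR n * ((s / eps - 1) ^ 2 / (16 * (k1 * k1)))).
  2:{ apply Rmult_le_compat_l; [apply pos_INR|]. apply Rmult_le_compat_r; [|exact HN].
      left; apply Rinv_0_lt_compat; nra. }
  replace (INR n * ((s / eps - 1) ^ 2 / (16 * (k1 * k1))))
    with (INR n * ((s / eps - 1) * eps) ^ 2 / (16 * (k1 * eps) ^ 2)) by (field; lra).
  replace (Rr ^ 2 / 4096) with (INR n * (Rr / 8) ^ 2 / (16 * (4 * INR n))) by (field; nra).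
  apply Rdiv_le_compat.
  - split; [apply Rmult_le_pos; [apply pos_INR | nra]|].
    apply Rmult_le_compat_l; [apply pos_INR|]. apply pow_incr. lra.
  - split; [nra|]. apply Rmult_le_compat_l; [lra|]. nra.
Qed.

(* [(K+1) eps > sqrt n] and [s + eps <= Rr]. *)
Lemma cell_mass_le a b : INR n * cell_mass n r eps asg a b <= 16 * Rr ^ 2.
Proof.
  pose proof (cell_card_le n eps Rr asg eps_pos Rr_ge_8 Rr_le_sqrt_n asg_valid a b) as HN.
  pose proof (cell_side_bounds n Rr Rr_ge_8 Rr_le_sqrt_n) as Hs.
  pose proof (lat_bound_bounds n eps eps_pos ltac:(lra)) as HK.
  fold k1 s N in HN, Hs, HK |- *.
  destruct (cell_mass_bounds_card a b) as [_ Hq].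
  assert (Hk1 : 0 < k1) by (unfold k1; pose proof (pos_INR (lat_bound n eps)); lra).
  assert (Hsq : sqrt (INR n) * sqrt (INR n) = INR n) by (apply sqrt_sqrt, pos_INR).
  assert (H16 : 0 <= 16 / (k1 * k1)) by (left; apply Rdiv_lt_0_compat; nra).
  apply Rle_trans with (INR n * (16 / (k1 * k1) * (s / eps + 1) ^ 2)).
  { apply Rmult_le_compat_l; [apply pos_INR|]. eapply Rle_trans; [exact Hq|].
    now apply Rmult_le_compat_l. }
  replace (INR n * (16 / (k1 * k1) * (s / eps + 1) ^ 2))
    with (16 * (INR n * (s + eps) ^ 2) / (k1 * eps) ^ 2) by (field; lra).
  apply Rdiv_le_of_mult; [nra|].
  assert ((s + eps) ^ 2 <= Rr ^ 2) by (apply pow_incr; lra).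
  assert (INR n <= (k1 * eps) ^ 2) by nra.
  assert (INR n * (s + eps) ^ 2 <= (k1 * eps) ^ 2 * Rr ^ 2)
    by (apply Rmult_le_compat; [apply pos_INR | nra | lra | lra]).
  lra.
Qed.

Lemma cell_mass_range a b : 0 <= cell_mass n r eps asg a b <= 1.
Proof.
  split.
  - apply Rsum_nonneg. intros p Hp. apply Rmult_le_pos.
    + now apply pi_stat_nonneg.
    + apply in_cell_range.
  - rewrite <- (pi_stat_sum n r eps eps_pos r_nonneg). apply Rsum_le_in. intros p Hp.
    pose proof (pi_stat_nonneg n r eps eps_pos r_nonneg p Hp). pose proof (in_cell_range asg a b p).
    nra.
Qed.
End CellMass.

Lemma exp_le_compat x y : x <= y -> exp x <= exp y.
Proof. intros [H|H]; [left; now apply exp_increasing | subst; lra]. Qed.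

Lemma exp_ge_1 x : 0 <= x -> 1 <= exp x.
Proof. intros. pose proof (exp_ineq1_le x). lra. Qed.

Lemma exp_m1_le_half : exp (-1) <= 1 / 2.
Proof.
  replace (-1) with (- (1)) by ring. rewrite exp_Ropp. pose proof (exp_ineq1_le 1).
  apply Rmult_le_reg_r with (exp 1); [lra|]. rewrite Rinv_l; lra.
Qed.

Lemma pow_le_exp x y k : 0 <= x -> x <= exp y -> x ^ k <= exp (INR k * y).
Proof.
  intros Hx Hxy. replace (exp (INR k * y)) with (exp y ^ k).
  - apply pow_incr. lra.
  - induction k as [|k IH]; [simpl; now rewrite Rmult_0_l, exp_0|].
    simpl pow. rewrite IH, S_INR, <- exp_plus. f_equal. ring.
Qed.

Lemma Rleb_false_lt x y : Rleb x y = false -> y < x.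
Proof. unfold Rleb. destruct (Rle_dec x y); [discriminate | lra]. Qed.

Lemma forallb_false_exists {A} (f : A -> bool) l :
  forallb f l = false -> exists x, In x l /\ f x = false.
Proof.
  induction l as [|x l IH]; simpl; [discriminate|]. destruct (f x) eqn:E; simpl.
  - intros H. destruct (IH H) as [y [Hy Hf]]. eauto.
  - intros _. exists x. auto.
Qed.

Definition lambda0 : R := 16384.

(* Markov's inequality for [exp(-X)] and [exp(X)], X the occupancy of cell
   (a, b), in pointwise form over configurations [l]. *)
Definition chernoff_term (asg : pt -> nat * nat) (Rr : R) (a b : nat) (l : list pt) : R :=
  exp (Rr ^ 2 / lambda0) * Rprod (fun p => exp (-1 * in_cell asg a b p)) l +
  exp (- (lambda0 * Rr ^ 2)) * Rprod (fun p => exp (1 * in_cell asg a b p)) l.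

Lemma chernoff_term_nonneg asg Rr a b l : 0 <= chernoff_term asg Rr a b l.
Proof.
  unfold chernoff_term.
  pose proof (Rprod_pos (fun p => exp (-1 * in_cell asg a b p)) l (fun p => exp_pos _)).
  pose proof (Rprod_pos (fun p => exp (1 * in_cell asg a b p)) l (fun p => exp_pos _)).
  pose proof (exp_pos (Rr ^ 2 / lambda0)). pose proof (exp_pos (- (lambda0 * Rr ^ 2))). nra.
Qed.

Lemma unbalanced_le_chernoff_terms m asg Rr l :
  1 - (if all_cells_balanced m asg Rr lambda0 l then 1 else 0) <=
  Rsum (seq 0 m) (fun a => Rsum (seq 0 m) (fun b => chernoff_term asg Rr a b l)).
Proof.
  assert (Hrow : forall a, 0 <= Rsum (seq 0 m) (fun b => chernoff_term asg Rr a b l))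
    by (intros; apply Rsum_nonneg; intros; apply chernoff_term_nonneg).
  destruct (all_cells_balanced m asg Rr lambda0 l) eqn:E.
  { pose proof (Rsum_nonneg (seq 0 m) _ (fun a _ => Hrow a)). lra. }
  unfold all_cells_balanced in E. apply forallb_false_exists in E as [a [Ha E]].
  apply forallb_false_exists in E as [b [Hb E]].
  eapply Rle_trans; [|apply Rsum_ge_term with (y := a); auto].
  eapply Rle_trans; [|apply Rsum_ge_term with (y := b); auto; intros; apply chernoff_term_nonneg].
  unfold chernoff_term. rewrite <- !exp_Rsum, <- !exp_plus.
  unfold cell_count in E. rewrite INR_length_filter in E. fold (in_cell asg a b) in E.
  set (X := Rsum l (in_cell asg a b)) in *.
  pose proof (exp_pos (Rr ^ 2 / lambda0 + -1 * X)).
  pose proof (exp_pos (- (lambda0 * Rr ^ 2) + 1 * X)).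
  apply andb_false_iff in E as [E|E]; apply Rleb_false_lt in E.
  - pose proof (exp_ge_1 (Rr ^ 2 / lambda0 + -1 * X) ltac:(lra)). lra.
  - pose proof (exp_ge_1 (- (lambda0 * Rr ^ 2) + 1 * X) ltac:(lra)). lra.
Qed.

Lemma tuple_sum_chernoff_term L w k asg Rr a b :
  tuple_sum L w k (chernoff_term asg Rr a b) =
  exp (Rr ^ 2 / lambda0) * (Rsum L (fun p => w p * exp (-1 * in_cell asg a b p))) ^ k +
  exp (- (lambda0 * Rr ^ 2)) * (Rsum L (fun p => w p * exp (1 * in_cell asg a b p))) ^ k.
Proof. unfold chernoff_term. now rewrite tuple_sum_plus, !tuple_sum_scal, !tuple_sum_Rprod. Qed.

Lemma pi_stat_exp_moment n r eps asg a b t : 0 < eps -> 0 <= r ->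
  Rsum (lattice n eps) (fun p => pi_stat n r eps p * exp (t * in_cell asg a b p)) =
  1 + (exp t - 1) * cell_mass n r eps asg a b.
Proof.
  intros Heps Hr. unfold cell_mass.
  rewrite (Rsum_ext_in _ _ (fun p => pi_stat n r eps p + (exp t - 1) * (pi_stat n r eps p * in_cell asg a b p))).
  - now rewrite Rsum_plus, Rsum_scal, pi_stat_sum.
  - intros p _. unfold in_cell. destruct (_ && _)%bool.
    + rewrite Rmult_1_r. ring.
    + rewrite Rmult_0_r, exp_0. ring.
Qed.

(* With [1 + x <= exp x], both tails become exponentially small once
   [n q] is of order [Rr^2]; [lambda0] is large enough for the constants
   [1/4096] and [16] of the cell masses. *)
Lemma binomial_tails_le n q Rr :
  0 <= q -> q <= 1 -> Rr ^ 2 / 4096 <= INR n * q -> INR n * q <= 16 * Rr ^ 2 ->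
  exp (Rr ^ 2 / lambda0) * (1 + (exp (-1) - 1) * q) ^ n +
  exp (- (lambda0 * Rr ^ 2)) * (1 + (exp 1 - 1) * q) ^ n <= 2 * exp (- (Rr ^ 2 / lambda0)).
Proof.
  intros Hq0 Hq1 Hlow Hup.
  pose proof exp_m1_le_half. pose proof exp_le_3. pose proof (exp_pos (-1)). pose proof (pos_INR n).
  pose proof (exp_ge_1 1 ltac:(lra)).
  pose proof (exp_pos (Rr ^ 2 / lambda0)). pose proof (exp_pos (- (lambda0 * Rr ^ 2))).
  assert (Hlower : exp (Rr ^ 2 / lambda0) * (1 + (exp (-1) - 1) * q) ^ n <= exp (- (Rr ^ 2 / lambda0))).
  { eapply Rle_trans.
    - apply Rmult_le_compat_l; [lra|]. apply pow_le_exp; [nra | apply exp_ineq1_le].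
    - rewrite <- exp_plus. apply exp_le_compat. unfold lambda0.
      assert (INR n * ((exp (-1) - 1) * q) <= - (INR n * q) / 2) by nra. lra. }
  assert (Hupper : exp (- (lambda0 * Rr ^ 2)) * (1 + (exp 1 - 1) * q) ^ n <= exp (- (Rr ^ 2 / lambda0))).
  { eapply Rle_trans.
    - apply Rmult_le_compat_l; [lra|]. apply pow_le_exp; [nra | apply exp_ineq1_le].
    - rewrite <- exp_plus. apply exp_le_compat. unfold lambda0.
      assert (INR n * ((exp 1 - 1) * q) <= 2 * (INR n * q)) by nra.
      assert (0 <= Rr ^ 2) by nra. lra. }
  lra.
Qed.

Lemma prob_balanced_ge n r eps Rr asg :
  0 <= r -> 0 < eps -> eps <= 1 -> 8 <= Rr -> Rr <= sqrt (INR n) ->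
  valid_assignment n eps Rr asg ->
  let m := INR (num_cells n Rr) in
  prob_positions n r eps (all_cells_balanced (num_cells n Rr) asg Rr lambda0)
  >= 1 - m * (m * (2 * exp (- (Rr ^ 2 / lambda0)))).
Proof.
  intros Hr Heps Heps1 HR8 HRn Hasg m. unfold prob_positions.
  set (L := lattice n eps). set (w := pi_stat n r eps). set (cells := seq 0 (num_cells n Rr)).
  set (d := 2 * exp (- (Rr ^ 2 / lambda0))).
  assert (Hw : forall p, In p L -> 0 <= w p) by (intros; now apply pi_stat_nonneg).
  assert (Hcells : forall c, m * c = Rsum cells (fun _ => c))
    by (intros; unfold cells; now rewrite Rsum_const, length_seq).
  assert (Hterm : forall a b, In a cells -> In b cells -> tuple_sum L w n (chernoff_term asg Rr a b) <= d).
  { intros a b Ha Hb. unfold cells in Ha, Hb. apply in_seq in Ha, Hb.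
    rewrite tuple_sum_chernoff_term. unfold w, L. rewrite !pi_stat_exp_moment by assumption.
    apply binomial_tails_le.
    - apply (cell_mass_range n r eps asg Hr Heps).
    - apply (cell_mass_range n r eps asg Hr Heps).
    - apply (cell_mass_ge n r eps Rr asg); auto; lia.
    - apply (cell_mass_le n r eps Rr asg); auto. }
  assert (Hunion : tuple_sum L w n
      (fun l => Rsum cells (fun a => Rsum cells (fun b => chernoff_term asg Rr a b l))) <= m * (m * d)).
  { rewrite tuple_sum_Rsum, Hcells. apply Rsum_le_in. intros a Ha.
    rewrite tuple_sum_Rsum, Hcells. apply Rsum_le_in. intros b Hb. now apply Hterm. }
  assert (Hfail : tuple_sum L w n
      (fun l => 1 + -1 * Rsum cells (fun a => Rsum cells (fun b => chernoff_term asg Rr a b l)))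
    <= tuple_sum L w n (fun l => if all_cells_balanced (num_cells n Rr) asg Rr lambda0 l then 1 else 0)).
  { apply tuple_sum_le; auto. intros l.
    pose proof (unbalanced_le_chernoff_terms (num_cells n Rr) asg Rr l). fold cells in H. lra. }
  rewrite tuple_sum_plus, tuple_sum_scal, tuple_sum_const in Hfail.
  unfold w, L in Hfail. rewrite pi_stat_sum, pow1 in Hfail by assumption.
  fold L w in Hfail. lra.
Qed.

Lemma num_cells_sqr_le n Rr : 8 <= Rr -> Rr <= sqrt (INR n) ->
  INR (num_cells n Rr) * INR (num_cells n Rr) <= INR n / 4.
Proof.
  intros HR8 HRn. destruct (num_cells_bounds n Rr HR8 HRn) as [_ Hm].
  assert (Hhalf : INR (num_cells n Rr) <= sqrt (INR n) / 2).
  { eapply Rle_trans; [exact Hm|]. apply Rdiv_le_of_mult; [lra|].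
    replace (sqrt (INR n) / 2 * Rr) with (sqrt (INR n) * (Rr / 2)) by field. nra. }
  pose proof (pos_INR (num_cells n Rr)).
  replace (INR n / 4) with (sqrt (INR n) / 2 * (sqrt (INR n) / 2))
    by (rewrite <- (sqrt_sqrt (INR n)) at 3 by apply pos_INR; field).
  nra.
Qed.

Lemma ln_le_compat x y : 0 < x -> x <= y -> ln x <= ln y.
Proof. intros Hx [H|H]; [left; now apply ln_increasing | subst; lra]. Qed.

(* [90000 / lambda0 > 5]. *)
Lemma exp_tail_mul_pow5_le n Rr : 1 <= INR n -> 90000 * ln (INR n) <= Rr ^ 2 ->
  exp (- (Rr ^ 2 / lambda0)) * INR n ^ 5 <= 1.
Proof.
  intros Hn HR.
  assert (Hln : 0 <= ln (INR n)) by (rewrite <- ln_1; apply ln_le_compat; lra).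
  pose proof (pow_le_exp (INR n) (ln (INR n)) 5 ltac:(lra) ltac:(rewrite exp_ln; lra)) as Hpow.
  pose proof (exp_pos (- (Rr ^ 2 / lambda0))).
  apply Rle_trans with (exp (- (Rr ^ 2 / lambda0)) * exp (INR 5 * ln (INR n)));
    [now apply Rmult_le_compat_l; [lra|]|].
  rewrite <- exp_plus, <- exp_0. apply exp_le_compat. unfold lambda0. simpl INR. lra.
Qed.

Lemma union_bound_le x m d : 6 <= x -> 0 <= m -> m * m <= x / 4 -> 0 <= d -> d * x ^ 5 <= 1 ->
  1 - m * (m * (2 * d)) >= 1 - 1 / x ^ 2.
Proof.
  intros Hx Hm Hmm Hd Hd5.
  assert (Hx2 : 0 < x ^ 2) by nra.
  assert (m * (m * (2 * d)) * x ^ 2 <= 1).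
  { replace (m * (m * (2 * d)) * x ^ 2) with ((m * m) * (2 * d * x ^ 2)) by ring.
    apply Rle_trans with (x / 4 * (2 * d * x ^ 2)); [apply Rmult_le_compat_r; nra|].
    replace (x / 4 * (2 * d * x ^ 2)) with (d * x ^ 3 / 2) by field.
    assert (d * x ^ 3 * x ^ 2 <= 1) by (replace (d * x ^ 3 * x ^ 2) with (d * x ^ 5) by ring; lra).
    assert (0 <= d * x ^ 3) by (apply Rmult_le_pos; [lra | apply pow_le; lra]).
    nra. }
  assert (m * (m * (2 * d)) <= 1 / x ^ 2).
  { apply Rmult_le_reg_r with (x ^ 2); [exact Hx2|]. field_simplify; lra. }
  lra.
Qed.

Theorem mainTheorem4 :
  exists (c lam : R), 0 < c /\ 1 <= lam /\
  exists N : nat, forall n : nat, (N <= n)%nat ->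
  forall (r eps Rr : R),
    0 <= r -> 0 < eps -> eps <= 1 -> eps < Rr ->
    c * sqrt (ln (INR n)) <= Rr -> Rr <= sqrt (INR n) ->
    forall asg : pt -> nat * nat,
      valid_assignment n eps Rr asg ->
      prob_positions n r eps
        (all_cells_balanced (num_cells n Rr) asg Rr lam)
      >= 1 - 1 / (INR n) ^ 2.
Proof.
  exists 300, lambda0. split; [lra|]. split; [unfold lambda0; lra|]. exists 6%nat.
  intros n Hn r eps Rr Hr Heps Heps1 HepsR Hc HRn asg Hasg.
  assert (Hn6 : 6 <= INR n) by (replace 6 with (INR 6) by (simpl; ring); now apply le_INR).
  assert (Hln : 1 <= ln (INR n)).
  { rewrite <- (ln_exp 1). apply ln_le_compat; [apply exp_pos|]. pose proof exp_le_3. lra. }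
  assert (Hsqrt_ln : 1 <= sqrt (ln (INR n))) by (rewrite <- sqrt_1; apply sqrt_le_1_alt; lra).
  assert (HR2 : 90000 * ln (INR n) <= Rr ^ 2).
  { replace (90000 * ln (INR n)) with ((300 * sqrt (ln (INR n))) ^ 2)
      by (rewrite Rpow_mult_distr, pow2_sqrt by lra; ring).
    apply pow_incr. lra. }
  pose proof (prob_balanced_ge n r eps Rr asg Hr Heps Heps1 ltac:(lra) HRn Hasg) as Hprob.
  cbv zeta in Hprob. eapply Rge_trans; [exact Hprob|].
  apply union_bound_le; [lra | apply pos_INR | apply num_cells_sqr_le; lra | left; apply exp_pos |].
  now apply exp_tail_mul_pow5_le; [lra|].
Qed.
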